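(* Let $n\ge 3$ be an integer and let $\overline D_n:=\langle a,b\mid aba=bab,\ ab^2a=b^{n-2}\rangle$. Then in $\overline D_n$ the identity $$a^n=(b^{n-4}a^{-1})^n$$ holds. *)

From HB Require Import structures.
From mathcomp Require Import all_boot monoid.
From mathcomp Require Import ssralg ssrint.
Set Implicit Arguments. Unset Strict Implicit. Unset Printing Implicit Defensive.

Local Open Scope group_scope.

Definition zexpg (G : groupType) (x : G) (z : int) : G :=
  match z with
  | Posz k => x ^+ k
  | Negz k => (x ^+ k.+1)^-1
  end.

Definition Dbar_rel (n : nat) (G : groupType) (a b : G) : Prop :=
  a * b * a = b * a * b /\ a * (b ^+ 2) * a = b ^+ (n - 2).

From HB Require Import structures.
From mathcomp Require Import all_boot monoid.
From mathcomp Require Import ssralg ssrint.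

Local Open Scope group_scope.

(* Write m = n - 2, so that the relations read aba = bab and ab^2a = b^m.
   The proof has three steps.
   1. The Garside element D = aba of the braid relation conjugates a to b
      and b to a.  Conjugating ab^2a = b^m by D therefore gives ba^2b = a^m.
   2. Hence a^n = a^2 (ba^2b) = (ba^2b) a^2, i.e. a^2ba^2b = ba^2ba^2, which
      says exactly that a^n commutes with b.
   3. Since b^(n-4) = b^-2 b^m = b^-2 (ab^2a), we get
      b^(n-4) a^-1 = b^-2 a b^2 = a^(b^2), so
      (b^(n-4) a^-1)^n = (a^n)^(b^2) = a^n by step 2.
   The file first relates integer powers [zexpg] to natural powers, then
   proves steps 1 and 2 for arbitrary elements of a group, and finally
   assembles the theorem. *)

Section IntegerPowers.

Variables (G : groupType) (x : G).

Lemma zexpg_subn (m d : nat) :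
  zexpg x (m%:Z - d%:Z)%R = (x ^+ d)^-1 * x ^+ m.
Proof.
have [le_dm | lt_md] := leqP d m.
  by rewrite subzn //= -{2}(subnKC le_dm) expgnDr mulKg.
have [k ->] : exists k, d = (m + k.+1)%N.
  by exists (d - m).-1; rewrite prednK ?subn_gt0 // subnKC // ltnW.
have -> : (m%:Z - (m + k.+1)%N%:Z)%R = Negz k.
  by rewrite NegzE PoszD GRing.opprD GRing.addrA GRing.subrr GRing.add0r.
by rewrite /= expgnDr invgM mulgVK.
Qed.

End IntegerPowers.

Section BraidRelation.

Variables (G : groupType) (a b : G).
Hypothesis braid : a * b * a = b * a * b.

Let D := a * b * a.

Lemma conj_garside_l : a ^ D = b.
Proof.
rewrite conjgE; apply: (mulgI D); rewrite mulVKg.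
by rewrite /D {1}braid !mulgA.
Qed.

Lemma conj_garside_r : b ^ D = a.
Proof.
rewrite conjgE; apply: (mulgI D); rewrite mulVKg.
by rewrite /D {2}braid !mulgA.
Qed.

(* Conjugating ab^2a = b^m by D yields the mirror relation ba^2b = a^m. *)
Lemma braid_mirror (m : nat) :
  a * b ^+ 2 * a = b ^+ m -> b * a ^+ 2 * b = a ^+ m.
Proof.
move=> rel; have := congr1 (conjg^~ D) rel.
by rewrite /= !conjMg !conjXg conj_garside_l conj_garside_r.
Qed.

End BraidRelation.

(* If ba^2b = a^m then a^(m+2) commutes with b, since
   a^(m+2) = a^2 (ba^2b) = (ba^2b) a^2. *)
Lemma mirror_power_commute (G : groupType) (a b : G) (m : nat) :
  b * a ^+ 2 * b = a ^+ m -> commute (a ^+ m.+2) b.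
Proof.
move=> mirror.
have split_l : a ^+ m.+2 = b * a ^+ 2 * b * a ^+ 2.
  by rewrite -addn2 expgnDr mirror.
have split_r : a ^+ m.+2 = a ^+ 2 * (b * a ^+ 2 * b).
  by rewrite -add2n expgnDr mirror.
by rewrite /commute {1}split_l {1}split_r !mulgA.
Qed.

Theorem mainTheorem5 (n : nat) (Hn : (3 <= n)%N) (G : groupType) (a b : G) :
  Dbar_rel n a b ->
  a ^+ n = (zexpg b (n%:Z - 4%:Z)%R * a^-1) ^+ n.
Proof.
case: n Hn => [|[|m]] // _ [braid rel].
rewrite subn2 /= in rel.
have b_pow : zexpg b (m.+2%:Z - 4%:Z)%R = (b ^+ 2)^-1 * b ^+ m.
  rewrite zexpg_subn -(add2n m) expgnDr.
  have -> : b ^+ 4 = b ^+ 2 * b ^+ 2 by rewrite -expgnDr.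
  by rewrite invgM -mulgA mulKg.
have twist : zexpg b (m.+2%:Z - 4%:Z)%R * a^-1 = a ^ (b ^+ 2).
  by rewrite b_pow -rel conjgE !mulgA mulgK.
rewrite twist -conjXg; apply/esym/conjg_fixP/commgP/commuteX.
exact/mirror_power_commute/braid_mirror.
Qed.
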